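(* Assume $k=2$ and write $l=l_1$, $y=y_1$. (1) If $r=e-1$, then $b=(l+1)e+h\le(l+2)e-2$, and $b=(l+2)e-2$ if and only if $h=e-2$. (2) If $r=e-2$, then $b=(l+1)(e-1)+h-p-1$ and $c=(p+l+2)(e-1)-b$. Further: (a) $l+1\le p\le2l+2$, and $p=2l+2$ implies $h>0$; (b) $(l+1)(e-3)\le b\le(l+1)(e-2)+e-3$; moreover $b=(l+1)(e-3)$ if and only if ($p=2l+2$ and $h=1$) or ($p=2l+1$ and $h=0$); and $b=(l+1)(e-2)+e-3$ implies $p=l+1$, $p>1$, $h=e-2$, $y=e+1$.
   Context: Let $(R,\mathfrak m)$ be a one-dimensional local Noetherian domain with quotient field $K$, not regular, analytically irreducible (the integral closure $\overline R$ of $R$ in $K$ is a DVR and a finite $R$-module) and residually rational. Let $v$ be the valuation of $\overline R$ normalized so a uniformizer $t$ has value 1, $v(R)=\{v(a):a\in R\setminus\{0\}\}$, $\mathfrak C=(R:_K\overline R)=t^c\overline R$ with $c$ the least element of $v(R)$ with $c+\mathbb N\subseteq v(R)$, $\delta=\ell_R(\overline R/R)$, $r=\ell_R((R:_K\mathfrak m)/R)$, $b=(c-\delta)r-\delta$, $e$ the least positive element of $v(R)$. Let $x\in\mathfrak m$ with $v(x)=e$ and $k=\ell_R(R/(\mathfrak C+xR))$. Let $p$ be the integer with $c-e\le pe<c$ and $h=(p+1)e-c$. When $k=2$, $y_1$ is the unique $y\in v(R)$ with $0<y<c$ and $y-e\notin v(R)$, and $l_1\ge0$ is the integer with $y_1+l_1e<c\le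 y_1+(l_1+1)e$; then $v(R)=\{0,e,\dots,pe\}\cup\{m\ge c\}\cup\{y_1,y_1+e,\dots,y_1+l_1e\}$. *)

(* A one-dimensional local domain R is modelled as a subring
   (a predicate) of its quotient field K; R-modules are R-submodules of K. *)
From mathcomp Require Import all_boot all_order all_algebra.
Set Implicit Arguments.
Unset Strict Implicit.
Unset Printing Implicit Defensive.
Import Order.TTheory GRing.Theory Num.Theory.
Local Open Scope ring_scope.

Section Defs.
Variable K : fieldType.
Implicit Types (R M N A B C I P : K -> Prop) (v : K -> int).

Definition subset_of A B := forall z, A z -> B z.

Definition subring R :=
  [/\ R 0, R 1, (forall a b, R a -> R b -> R (a - b))
   & (forall a b, R a -> R b -> R (a * b))].

Definition submod R M :=
  [/\ M 0, (forall a b, M a -> M b -> M (a + b))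
   & (forall s a, R s -> M a -> M (s * a))].

Definition ideal R I := subset_of I R /\ submod R I.

Definition rspan R (s : seq K) : K -> Prop := fun u =>
  exists a : nat -> K, (forall i, R (a i)) /\ u = \sum_(i < size s) a i * s`_i.

Definition fin_gen R M := exists s : seq K, forall u, M u <-> rspan R s u.

Definition noetherian R := forall I, ideal R I -> fin_gen R I.

Definition quotfield R :=
  forall z, exists a b, [/\ R a, R b, b != 0 & z = a / b].

Definition runit R a := [/\ R a, a != 0 & R a^-1].

Definition maxideal R : K -> Prop := fun a => R a /\ ~ runit R a.

(* local: the non-units form an ideal (the unique maximal ideal) *)
Definition local_ring R := ideal R (maxideal R).

Definition prime_ideal R P :=
  [/\ ideal R P, ~ P 1 & forall a b, R a -> R b -> P (a * b) -> P a \/ P b].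

Definition one_dim_local R :=
  (exists a, maxideal R a /\ a != 0) /\
  forall P, prime_ideal R P -> (exists a, P a /\ a != 0) ->
    forall a, P a <-> maxideal R a.

(* regular (dim 1): the maximal ideal is principal *)
Definition regular R :=
  exists g, R g /\ forall a, maxideal R a <-> exists s, R s /\ a = s * g.

(* normalized discrete valuation on K (value of 0 irrelevant) *)
Definition valuation v :=
  [/\ (forall x y, x != 0 -> y != 0 -> v (x * y) = v x + v y),
      (forall x y, x != 0 -> y != 0 -> x + y != 0 ->
                   Num.min (v x) (v y) <= v (x + y))
    & exists t, t != 0 /\ v t = 1].

Definition vring v : K -> Prop := fun x => x = 0 \/ 0 <= v x.

Definition integral R x :=
  exists q : {poly K}, [/\ q \is monic, (forall i, R q`_i) & root q x].

(* the integral closure of R in K is the DVR of v and is a finite R-module *)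
Definition analytically_irreducible R v :=
  [/\ valuation v, (forall x, integral R x <-> vring v x) & fin_gen R (vring v)].

(* R/m -> Rbar/t Rbar is onto (residue fields coincide) *)
Definition residually_rational R v :=
  forall u, vring v u -> exists a, R a /\ (u = a \/ 0 < v (u - a)).

Definition vset R v (n : nat) := exists a, [/\ R a, a != 0 & v a = n%:Z].

Definition colon A B : K -> Prop := fun z => forall b, B b -> A (z * b).

Definition sum_mul C (x : K) R : K -> Prop :=
  fun z => exists a s, [/\ C a, R s & z = a + x * s].

Definition simple_step R A B :=
  [/\ subset_of A B, (exists z, B z /\ ~ A z)
    & forall P, submod R P -> subset_of A P -> subset_of P B ->
        subset_of P A \/ subset_of B P].

(* l_R(M/N) = n : there is a composition series N = M_0 < ... < M_n = M *)
Definition rlength R M N (n : nat) :=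
  exists f : nat -> K -> Prop,
    [/\ (forall i, submod R (f i)), (forall z, f 0%N z <-> N z),
        (forall z, f n z <-> M z)
      & forall i, (i < n)%N -> simple_step R (f i) (f i.+1)].

End Defs.

(* For R-submodules [N <= M] of [K] with [N] containing every element of large
   value, each step of a composition series of [M/N] adds exactly one value
   (residual rationality lets one cancel leading terms), so [l_R(M/N)] is the
   number of values of [M] that are not values of [N].  For [C + xR <= R] this
   number is [k = 2], which forces [v(R) ∩ [0, c) = {0, e, .., pe} ∪ {y, .., y + le}];
   hence [delta = c - (p + l + 2)] and [b = (p + l + 2) r - delta].  The claims
   are then arithmetic, given three facts: [c - 1] is not a value (minimality of
   [c]), which excludes [c = pe + 1] and, when [p = l + 1], [c = pe + 2]; [l < p];
   and if [r = e - 2] then [2y < c + e], since otherwise [y - e] and all but two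
   of the integers in [[c - e, c)] are values of [R :_K m] but not of [R], giving
   [r >= e - 1]. *)

From mathcomp Require Import all_boot all_order all_algebra.
From mathcomp Require Import zify boolp.
Import Order.TTheory GRing.Theory Num.Theory.
Local Open Scope ring_scope.
Set Implicit Arguments.
Unset Strict Implicit.

Section Valuation.
Variables (K : fieldType) (v : K -> int).
Hypothesis hv : valuation v.

Lemma valuationM x y : x != 0 -> y != 0 -> v (x * y) = v x + v y.
Proof. by case: hv => h _ _; apply: h. Qed.

Lemma valuation1 : v 1 = 0.
Proof.
have := valuationM (oner_neq0 K) (oner_neq0 K); rewrite mulr1 => h.
by apply: (addrI (v 1)); rewrite addr0 -h.
Qed.

Lemma valuationV z : z != 0 -> v z^-1 = - v z.
Proof.
by move=> z0; have := valuationM z0 (invr_neq0 z0); rewrite mulfV // valuation1; lia.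
Qed.

Lemma valuationN z : z != 0 -> v (- z) = v z.
Proof.
move=> z0; have nz0 : - z != 0 by rewrite oppr_eq0.
by have := valuationM nz0 nz0; rewrite mulrNN valuationM //; lia.
Qed.

Lemma valuationX z n : z != 0 -> v (z ^+ n) = n%:Z * v z.
Proof.
move=> z0; elim: n => [|n IH]; first by rewrite expr0 valuation1 mul0r.
by rewrite exprS valuationM ?expf_neq0 // IH; lia.
Qed.

Lemma valuationD_ge x y n : x != 0 -> y != 0 -> x + y != 0 ->
  n <= v x -> n <= v y -> n <= v (x + y).
Proof.
move=> x0 y0 xy0 hx hy; case: hv => _ h _.
by apply: le_trans (h _ _ x0 y0 xy0); rewrite le_min hx.
Qed.

Lemma valuationD_lt x y : x != 0 -> y != 0 -> v x < v y -> x + y != 0 /\ v (x + y) = v x.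
Proof.
move=> x0 y0 lt_xy; case: hv => _ hmin _.
have xy0 : x + y != 0.
  apply: contraTneq lt_xy => /eqP; rewrite addr_eq0 => /eqP ->.
  by rewrite valuationN // ltxx.
split=> //.
have ny0 : - y != 0 by rewrite oppr_eq0.
have := hmin _ _ xy0 ny0; rewrite addrK valuationN // => /(_ x0).
have := hmin _ _ x0 y0 xy0.
by rewrite !ge_min => /orP [] h1 /orP [] h2; lia.
Qed.

Definition vge (n : int) (z : K) := z = 0 \/ n <= v z.

Lemma vgeW n m z : n <= m -> vge m z -> vge n z.
Proof. by move=> le_nm [->|hz]; [left | right; apply: le_trans hz]. Qed.

Lemma vgeD n x y : vge n x -> vge n y -> vge n (x + y).
Proof.
move=> [->|hx]; first by rewrite add0r.
move=> [->|hy]; first by rewrite addr0; right.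
have [->|x0] := eqVneq x 0; first by rewrite add0r; right.
have [->|y0] := eqVneq y 0; first by rewrite addr0; right.
have [->|xy0] := eqVneq (x + y) 0; first by left.
by right; apply: valuationD_ge.
Qed.

Lemma vgeM n m x y : vge n x -> vge m y -> vge (n + m) (x * y).
Proof.
move=> [->|hx]; first by left; rewrite mul0r.
move=> [->|hy]; first by left; rewrite mulr0.
have [->|x0] := eqVneq x 0; first by left; rewrite mul0r.
have [->|y0] := eqVneq y 0; first by left; rewrite mulr0.
by right; rewrite valuationM //; lia.
Qed.

Lemma exists_val_nat (n : nat) : exists z, z != 0 /\ v z = n%:Z.
Proof.
case: hv => _ _ [t [t0 vt]].
by exists (t ^+ n); rewrite expf_neq0 // valuationX // vt mulr1.
Qed.

End Valuation.

Section Subring.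
Variables (K : fieldType) (R : K -> Prop) (v : K -> int).
Hypothesis hR : subring R.

Lemma subring0 : R 0. Proof. by case: hR. Qed.
Lemma subring1 : R 1. Proof. by case: hR. Qed.
Lemma subringB a b : R a -> R b -> R (a - b). Proof. by case: hR => _ _ h _; apply: h. Qed.
Lemma subringM a b : R a -> R b -> R (a * b). Proof. by case: hR => _ _ _ h; apply: h. Qed.

Lemma subringN a : R a -> R (- a).
Proof. by move=> ha; rewrite -sub0r; apply: subringB => //; apply: subring0. Qed.

Lemma subringD a b : R a -> R b -> R (a + b).
Proof. by move=> ha hb; rewrite -[b]opprK; apply: subringB => //; apply: subringN. Qed.

Lemma subringX a n : R a -> R (a ^+ n).
Proof.
move=> ha; elim: n => [|n IH]; first by rewrite expr0; exact: subring1.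
by rewrite exprS; apply: subringM.
Qed.

Hypothesis hai : analytically_irreducible R v.

Lemma ai_valuation : valuation v. Proof. by case: hai. Qed.
Let hv := ai_valuation.

Lemma subring_vring a : R a -> vring v a.
Proof.
move=> ha; case: hai => _ hint _; apply/hint.
exists ('X - a%:P); split; [exact: monicXsubC | | by rewrite root_XsubC].
move=> i; rewrite coefB coefX coefC.
case: i => [|[|i]] /=; rewrite ?subr0 ?sub0r.
- exact: subringN.
- exact: subring1.
- exact: subring0.
Qed.

Lemma subring_val_ge0 a : R a -> a != 0 -> 0 <= v a.
Proof. by move=> /subring_vring [->|//]; rewrite eqxx. Qed.

Lemma val_gt0_maxideal a : R a -> 0 < v a -> maxideal R a.
Proof.
move=> ha va; split=> // -[_ a0 hia].
by have := subring_val_ge0 hia (invr_neq0 a0); rewrite valuationV //; lia.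
Qed.

Lemma vge_submod n : submod R (vge v n).
Proof.
split; [by left | exact: vgeD |] => s a hs ha.
by rewrite -[n]add0r; apply: vgeM => //; apply: subring_vring.
Qed.

Definition vsetz (A : K -> Prop) (j : int) := exists a, [/\ A a, a != 0 & v a = j].

Lemma vsetz_sub A B j : subset_of A B -> vsetz A j -> vsetz B j.
Proof. by move=> sAB [a [ha a0 va]]; exists a; split=> //; apply: sAB. Qed.

Hypothesis hQ : quotfield R.

Lemma common_denominator (s : seq K) :
  exists d, [/\ R d, d != 0 & forall i, (i < size s)%N -> R (d * s`_i)].
Proof.
elim: s => [|w s [d [hd d0 hs]]].
  by exists 1; split=> //; [exact: subring1 | exact: oner_neq0].
have [a [b [ha hb b0 ->]]] := hQ w.
exists (d * b); split; [exact: subringM | by rewrite mulf_neq0 |].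
case=> [|i] /= hi; first by rewrite mulrAC -mulrA mulfVK //; apply: subringM.
by rewrite mulrAC; apply: subringM => //; apply: hs.
Qed.

(* The finite generation of [vring v] over [R] yields a common denominator [d],
   and then [d * vring v] is contained in [R]. *)
Lemma exists_vge_sub : exists N0 : int, forall z, vge v N0 z -> R z.
Proof.
case: hai => _ _ [s hs].
have [d [hd d0 hds]] := common_denominator s.
have hdz z : vring v z -> R (d * z).
  move=> /hs [a [ha ->]]; rewrite mulr_sumr.
  apply: (big_ind R); [exact: subring0 | exact: subringD |] => i _.
  by rewrite mulrCA; apply: subringM => //; apply: hds.
exists (v d) => z [->|hz]; first exact: subring0.
have [->|z0] := eqVneq z 0; first exact: subring0.
have -> : z = d * (z / d) by rewrite mulrCA mulfV ?mulr1.
apply: hdz; right.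
by rewrite valuationM ?invr_eq0 // valuationV //; lia.
Qed.

Hypothesis hrr : residually_rational R v.

(* Residual rationality lets one cancel the leading term of [b] by an element
   of [A] of the same value; iterating raises the value until [b] falls into [A]. *)
Lemma value_gap A B N0 : submod R A -> submod R B -> subset_of A B ->
  (forall z, vge v N0 z -> A z) ->
  forall b, B b -> ~ A b -> exists b', [/\ B b', b' != 0 & ~ vsetz A (v b')].
Proof.
move=> [A0 AD AM] [B0 BD BM] sAB hN0.
suff H (m : nat) b : B b -> ~ A b -> N0 - v b <= m%:Z ->
    exists b', [/\ B b', b' != 0 & ~ vsetz A (v b')].
  by move=> b hb hnb; apply: (H `|N0 - v b|%N b hb hnb); lia.
elim: m b => [|m IH] b hb hnb hm.
  by exfalso; apply: hnb; apply: hN0; right; lia.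
have b0 : b != 0 by apply: contra_notN hnb => /eqP ->.
have [[a [ha a0 vab]]|hn] := EM (vsetz A (v b)); last by exists b.
have hba : vring v (b / a).
  by right; rewrite valuationM ?invr_neq0 // valuationV // vab; lia.
have [lam [hlam [eb|hpos]]] := hrr hba.
  by exfalso; apply: hnb; rewrite -(divfK a0 b) eb; apply: AM.
have hb' : B (b - lam * a).
  by apply: BD => //; rewrite -mulNr; apply: BM; [exact: subringN | exact: sAB].
have hnb' : ~ A (b - lam * a).
  by move=> hA; apply: hnb; rewrite -(subrK (lam * a) b); apply: AD => //; apply: AM.
have eb' : b - lam * a = a * (b / a - lam).
  by rewrite mulrBr mulrCA mulfV // mulr1 [a * _]mulrC.
have d0 : b / a - lam != 0.
  by apply: contra_notN hnb'; rewrite eb' => /eqP ->; rewrite mulr0.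
apply: (IH _ hb' hnb'); move: hm hpos; rewrite eb' valuationM // vab.
by move: (v (b / a - lam)) => q; lia.
Qed.

Lemma submod_sub_of_vsetz A B N0 : submod R A -> submod R B -> subset_of A B ->
  (forall z, vge v N0 z -> A z) -> (forall b, B b -> b != 0 -> vsetz A (v b)) ->
  subset_of B A.
Proof.
move=> sA sB sAB hN0 hval b hb; apply: contrapT => hnb.
by have [b' [hb' b0 []]] := value_gap sA sB sAB hN0 hb hnb; apply: hval.
Qed.

Lemma vge_sub_of_vset (n : nat) : (forall m, (n <= m)%N -> vset R v m) ->
  forall z, vge v n%:Z z -> R z.
Proof.
move=> hn; have [N0 hN0] := exists_vge_sub.
pose A z := R z /\ vge v n%:Z z.
have sA : submod R A.
  have [B0 BD BM] := vge_submod n%:Z.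
  split; first by split; [exact: subring0 | left].
    by move=> a b [ha ga] [hb gb]; split; [exact: subringD | exact: BD].
  by move=> s a hs [ha ga]; split; [exact: subringM | exact: BM].
move=> z hz; suff [] : A z by [].
apply: (submod_sub_of_vsetz (N0 := Num.max N0 n%:Z) sA (vge_submod n%:Z)) => //.
- by move=> w [].
- by move=> w hw; split; [apply: hN0 | ]; apply: vgeW hw; rewrite le_max lexx ?orbT.
- move=> b [->|hb] b0; first by rewrite eqxx in b0.
  have [a [ha a0 va]] := hn `|v b|%N ltac:(lia).
  by exists a; split=> //; [split=> //; right | ]; lia.
Qed.

Lemma simple_step_vsetz_lt A B j1 j2 : submod R A -> submod R B ->
  simple_step R A B -> j1 < j2 -> vsetz B j1 -> vsetz B j2 -> ~ vsetz A j2 ->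
  vsetz A j1.
Proof.
move=> [A0 AD AM] [B0 BD BM] [sAB _ hss] lt12 [b1 [hb1 b10 vb1]] hB2 nA2.
pose P z := exists a w, [/\ A a, B w, vge v j2 w & z = a + w].
have sP : submod R P.
  have [G0 GD GM] := vge_submod j2.
  split; first by exists 0, 0; rewrite addr0; split.
    move=> _ _ [a [w [ha hw gw ->]]] [a' [w' [ha' hw' gw' ->]]].
    exists (a + a'), (w + w'); rewrite addrACA.
    by split; [apply: AD | apply: BD | apply: GD |].
  move=> s _ hs [a [w [ha hw gw ->]]].
  by exists (s * a), (s * w); rewrite mulrDr; split; [apply: AM | apply: BM | apply: GM |].
have sAP : subset_of A P by move=> z hz; exists z, 0; rewrite addr0; split=> //; left.
have sPB : subset_of P B by move=> _ [a [w [ha hw _ ->]]]; apply: BD => //; apply: sAB.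
have [sPA|sBP] := hss P sP sAP sPB.
  case: nA2; apply: vsetz_sub sPA _; case: hB2 => b2 [hb2 b20 vb2].
  by exists b2; split=> //; exists 0, b2; rewrite add0r; split=> //; right; rewrite vb2.
have [a [w [ha hw gw eb1]]] := sBP _ hb1.
have [w0|w0] := eqVneq w 0; first by exists b1; split=> //; rewrite eb1 w0 addr0.
have {}gw : j2 <= v w by case: gw => // w0'; rewrite w0' eqxx in w0.
have nw0 : - w != 0 by rewrite oppr_eq0.
have [a0 va] : b1 + - w != 0 /\ v (b1 + - w) = v b1.
  by apply: valuationD_lt => //; rewrite valuationN // vb1; apply: lt_le_trans gw.
have ea : a = b1 + - w by rewrite eb1 addrK.
by exists a; rewrite ea va vb1; split=> //; rewrite -ea.
Qed.

Lemma simple_step_vsetz A B lo N0 : submod R A -> submod R B -> simple_step R A B ->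
  (forall z, vge v N0 z -> A z) -> (forall z, B z -> z != 0 -> lo <= v z) ->
  exists j0, [/\ lo <= j0 < N0, ~ vsetz A j0
    & forall j, vsetz B j <-> vsetz A j \/ j = j0].
Proof.
move=> sA sB hss hN0 hlo; have [sAB [b [hb hnb]] _] := hss.
have [b' [hb' b0 hn]] := value_gap sA sB sAB hN0 hb hnb.
have hB' : vsetz B (v b') by exists b'.
exists (v b'); split=> //.
  rewrite hlo //= ltNge; apply/negP => hge.
  by apply: hn; exists b'; split=> //; apply: hN0; right.
move=> j; split=> [hj|[/(vsetz_sub sAB) //|->] //].
have [hAj|nAj] := EM (vsetz A j); [by left | right].
by case: (ltgtP j (v b')) => // hlt; exfalso;
  [apply: nAj | apply: hn]; apply: (simple_step_vsetz_lt sA sB hss hlt).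
Qed.

Definition newvals (M N : K -> Prop) (lo : int) (n : nat) :=
  count (fun j : nat => `[< vsetz M (lo + j%:Z) /\ ~ vsetz N (lo + j%:Z) >]) (iota 0 n).

(* Along a composition series every simple step contributes exactly one new
   value, so a length is the number of values of [M] that are not values of [N]. *)
Lemma rlength_newvals M N lo N0 k : rlength R M N k ->
  (forall z, vge v N0 z -> N z) -> (forall z, M z -> z != 0 -> lo <= v z) ->
  lo <= N0 -> newvals M N lo `|N0 - lo| = k.
Proof.
move=> [f [hsub hf0 hfk hst]] hN0 hlo hloN0.
have ef0 : f 0%N = N by apply/funext => z; apply/propext/hf0.
have efk : f k = M by apply/funext => z; apply/propext/hfk.
have hinc i j : (i <= j <= k)%N -> subset_of (f i) (f j).
  elim: j => [|j IH] /andP [hij hjk] z hz; first by move: hij hz; rewrite leqn0 => /eqP ->.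
  move: hij; rewrite leq_eqVlt => /orP [/eqP <- //| hij].
  by have [sj _ _] := hst j hjk; apply: sj; apply: IH => //; rewrite -ltnS hij ltnW.
rewrite -efk; suff : forall i, (i <= k)%N -> newvals (f i) N lo `|N0 - lo| = i by apply.
elim=> [|i IH] hi.
  rewrite -ef0 /newvals (eq_count (a2 := pred0)) ?count_pred0 // => j.
  by apply/asboolP => -[].
have sNf : subset_of N (f i) by rewrite -ef0; apply: hinc; rewrite leq0n ltnW.
have [j0 [/andP [loj0 j0N0] nA0 hj0]] := simple_step_vsetz (hsub i) (hsub i.+1)
  (hst i hi) (fun z hz => sNf z (hN0 z hz))
  (fun z hz => hlo z ((hfk z).1 (hinc i.+1 k ltac:(lia) z hz))).
pose isnew j : bool := `[< vsetz (f i) (lo + j%:Z) /\ ~ vsetz N (lo + j%:Z) >].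
rewrite /newvals (eq_count (a2 := predU isnew (pred1 `|j0 - lo|%N))); last first.
  move=> j /=; apply/asboolP/orP => [[/hj0 [hA|ej] hN]|[/asboolP [hA hN]|/eqP ej]].
  - by left; apply/asboolP.
  - by right; apply/eqP; lia.
  - by split=> //; apply/hj0; left.
  - have -> : lo + j%:Z = j0 by lia.
    by split; [apply/hj0; right | move/(vsetz_sub sNf)].
have := count_predUI isnew (pred1 `|j0 - lo|%N) (iota 0 `|N0 - lo|).
rewrite (eq_count (a1 := predI _ _) (a2 := pred0)) ?count_pred0; last first.
  move=> j /=; apply/andP => -[/asboolP [hA _] /eqP ej]; apply: nA0.
  by have <- : lo + j%:Z = j0 by lia.
rewrite addn0 => ->; rewrite -/(newvals (f i) N lo _) IH ?(ltnW hi) //.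
rewrite (count_uniq_mem _ (iota_uniq 0 _)) mem_iota.
have -> : (0 <= `|j0 - lo| < 0 + `|N0 - lo|)%N by apply/andP; split; lia.
by rewrite addn1.
Qed.

Hypothesis hloc : local_ring R.

(* If [v a = 0], residual rationality gives [lam] with [v (1 - lam * a) > 0];
   since [1 - lam * a] is not in the maximal ideal it is a unit, which contradicts
   the positivity of its value. *)
Lemma maxideal_val_gt0 a : maxideal R a -> a != 0 -> 0 < v a.
Proof.
move=> [ha hna] a0; rewrite lt_neqAle subring_val_ge0 // andbT.
apply/negP => /eqP va0.
have hia : vring v a^-1 by right; rewrite valuationV // -va0 oppr0.
have [lam [hlam [ea|hpos]]] := hrr hia; first by apply: hna; split; rewrite ?ea.
have d0 : a^-1 - lam != 0.
  by apply: contra_notN hna; rewrite subr_eq0 => /eqP ea; split; rewrite ?ea.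
have [_ [_ mD mM]] := hloc.
have : runit R (1 - lam * a).
  apply: contrapT => hnu.
  have : maxideal R 1.
    rewrite -(subrK (lam * a) 1); apply: mD; last exact: mM.
    by split=> //; apply: subringB; [exact: subring1 | exact: subringM].
  case=> _; apply; split; [exact: subring1 | exact: oner_neq0 |].
  by rewrite invr1; exact: subring1.
rewrite (_ : 1 - lam * a = a * (a^-1 - lam)); last by rewrite mulrBr mulfV // mulrC.
case=> _ b0 hbi; have := subring_val_ge0 hbi (invr_neq0 b0).
rewrite valuationV // valuationM // -va0.
by move: hpos; move: (v (a^-1 - lam)) => q; lia.
Qed.

End Subring.

Lemma leq_size_count_iota (P : pred nat) (L : seq nat) n : uniq L ->
  (forall j, j \in L -> P j && (j < n)%N) -> (size L <= count P (iota 0 n))%N.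
Proof.
move=> uL hL; rewrite -size_filter; apply: uniq_leq_size => // j /hL /andP [hP hn].
by rewrite mem_filter mem_iota hP.
Qed.

Lemma count_iota_uniq (P : pred nat) (L : seq nat) n : uniq L ->
  (forall j, (j < n)%N -> P j = (j \in L)) -> (forall j, j \in L -> (j < n)%N) ->
  count P (iota 0 n) = size L.
Proof.
move=> uL hP hn; rewrite -size_filter; apply/perm_size/uniq_perm => //.
  exact/filter_uniq/iota_uniq.
move=> j; rewrite mem_filter mem_iota /= add0n.
case: (ltnP j n) => jn; first by rewrite hP // andbT.
by rewrite andbF; apply/esym/negP => /hn; rewrite ltnNge jn.
Qed.

Lemma count_neq2_iota (a b n m : nat) : a != b -> (n <= a < n + m)%N ->
  (n <= b < n + m)%N -> count (fun j => (j != a) && (j != b)) (iota n m) = (m - 2)%N.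
Proof.
move=> ab ha hb.
have := count_predUI (pred1 a) (pred1 b) (iota n m).
rewrite (eq_count (a1 := predI _ _) (a2 := pred0)) ?count_pred0; last first.
  by move=> j /=; apply/andP => -[/eqP -> /eqP eab]; rewrite eab eqxx in ab.
rewrite !(count_uniq_mem _ (iota_uniq n m)) !mem_iota ha hb addn0 => hU.
have := count_predC (predU (pred1 a) (pred1 b)) (iota n m).
rewrite hU size_iota (eq_count (a1 := predC _) (a2 := fun j => (j != a) && (j != b))).
  by lia.
by move=> j /=; rewrite negb_or.
Qed.

Section ColengthTwo.
Variables (K : fieldType) (R : K -> Prop) (v : K -> int).
Hypotheses (hR : subring R) (hQ : quotfield R) (hloc : local_ring R).
Hypotheses (hai : analytically_irreducible R v) (hrr : residually_rational R v).
Variables (c e p y l : nat) (x : K).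
Hypothesis hc2 : forall m, (c <= m)%N -> vset R v m.
Hypothesis hc3 : forall c', vset R v c' ->
  (forall m, (c' <= m)%N -> vset R v m) -> (c <= c')%N.
Hypotheses (he1 : (0 < e)%N) (he2 : vset R v e).
Hypothesis he3 : forall n, (0 < n)%N -> vset R v n -> (e <= n)%N.
Hypotheses (hp1 : c%:Z - e%:Z <= (p * e)%:Z) (hp2 : (p * e < c)%N).
Hypotheses (hy1 : vset R v y) (hy2 : (0 < y < c)%N).
Hypothesis hy3 : ~ ((e <= y)%N /\ vset R v (y - e)).
Hypotheses (hl1 : (y + l * e < c)%N) (hl2 : (c <= y + l.+1 * e)%N).
Hypothesis hx : v x = e%:Z.

Let hv := ai_valuation hai.
Let CxR := sum_mul (colon R (vring v)) x R.

Lemma vge_c_R z : vge v c%:Z z -> R z.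
Proof. exact: (vge_sub_of_vset hR hai hQ hrr hc2). Qed.

Lemma vset_mul_e j : vset R v (j * e).
Proof.
have [a [ha a0 va]] := he2.
exists (a ^+ j); split; [exact: subringX | exact: expf_neq0 |].
by rewrite valuationX // va; lia.
Qed.

Lemma vset_y_add i : vset R v (y + i * e).
Proof.
have [a [ha a0 va]] := vset_mul_e i; have [w [hw w0 vw]] := hy1.
exists (w * a); split; [exact: subringM | exact: mulf_neq0 |].
by rewrite valuationM // vw va.
Qed.

Lemma not_vset_predc : ~ vset R v c.-1.
Proof.
move=> hc; suff : (c <= c.-1)%N by lia.
apply: (hc3 hc) => m hm; have [-> //|ne] := eqVneq m c.-1.
by apply: hc2; lia.
Qed.

Lemma colon_vring_val a : colon R (vring v) a -> a != 0 -> c%:Z <= v a.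
Proof.
move=> ha a0.
have haR : R a by rewrite -[a]mulr1; apply: ha; right; rewrite valuation1.
have va := subring_val_ge0 hR hai haR a0.
suff : (c <= `|v a|)%N by lia.
apply: hc3 => [|m hm]; first by exists a; split=> //; lia.
have [t [t0 vt]] := exists_val_nat hv (m - `|v a|).
exists (a * t); split; [apply: ha; right; lia | exact: mulf_neq0 |].
by rewrite valuationM // vt; lia.
Qed.

Lemma vsetz_CxR (j : nat) : vsetz v CxR j%:Z ->
  (c <= j)%N \/ (e <= j)%N /\ vset R v (j - e).
Proof.
move=> [_ [[a [s [ha hs ->]]] z0 vz]].
have [xs0|xs0] := eqVneq (x * s) 0.
  by left; move: z0 vz; rewrite xs0 addr0 => a0 va; have := colon_vring_val ha a0; lia.
have [x0 s0] : x != 0 /\ s != 0 by apply/andP; rewrite -negb_or -mulf_eq0.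
have vxs : v (x * s) = e%:Z + v s by rewrite valuationM // hx.
have vs0 := subring_val_ge0 hR hai hs s0.
have from_xs : v (a + x * s) = v (x * s) -> (e <= j)%N /\ vset R v (j - e).
  by rewrite vz vxs => ev; split; [lia | exists s; split=> //; lia].
have [a0|a0] := eqVneq a 0; first by right; apply: from_xs; rewrite a0 add0r.
have ca := colon_vring_val ha a0.
case: (ltgtP (v a) (v (x * s))) => hcmp.
- by left; have [_ ev] := valuationD_lt hv a0 xs0 hcmp; move: vz; rewrite ev; lia.
- by right; apply: from_xs; have [_ ev] := valuationD_lt hv xs0 a0 hcmp; rewrite addrC.
- have hle : v a <= v (x * s) by rewrite hcmp.
  by left; have := valuationD_ge hv a0 xs0 z0 (lexx _) hle; rewrite vz; lia.
Qed.

Hypothesis hk : rlength R R CxR 2.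

Lemma newvals_CxR : newvals v R CxR 0 c = 2%N.
Proof.
have := rlength_newvals hR hai hrr (lo := 0) (N0 := c%:Z) hk.
rewrite subr0 absz_nat; apply; last by [].
- move=> z hz; exists z, 0; split; [| exact: subring0 | by rewrite mulr0 addr0].
  by move=> w hw; apply: vge_c_R; rewrite -[c%:Z]addr0; apply: vgeM.
- exact: subring_val_ge0 hR hai.
Qed.

Lemma e_lt_y : (e < y)%N.
Proof.
have ley : (e <= y)%N by apply: he3 => //; case/andP: hy2.
rewrite ltn_neqAle ley andbT; apply: contra_notN hy3 => /eqP ey.
by rewrite -ey subnn; split=> //; rewrite -(mul0n e); apply: vset_mul_e.
Qed.

(* Otherwise [0], [y] and [s] would be three values of [R] missing from [C + xR]. *)
Lemma vset_sub_e s : vset R v s -> (0 < s < c)%N -> s != y ->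
  (e <= s)%N /\ vset R v (s - e).
Proof.
move=> hs /andP [s0 sc] sy; apply: contrapT => hn.
have hnew j : vset R v j -> (j < c)%N -> ~ ((e <= j)%N /\ vset R v (j - e)) ->
    `[< vsetz v R (0 + j%:Z) /\ ~ vsetz v CxR (0 + j%:Z) >] && (j < c)%N.
  move=> hj jc hnj; rewrite jc andbT; apply/asboolP; rewrite add0r.
  by split=> // /vsetz_CxR [cj|/hnj //]; lia.
suff : (size [:: 0%N; y; s] <= newvals v R CxR 0 c)%N by rewrite newvals_CxR.
apply: leq_size_count_iota => [|j].
  by rewrite /= !inE; lia.
rewrite !inE => /or3P [] /eqP ->; apply: hnew => //.
- by rewrite -(mul0n e); apply: vset_mul_e.
- by lia.
- by case; lia.
- by lia.
Qed.

Lemma vset_lt_c s : vset R v s -> (s < c)%N ->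
  (exists2 j, (j <= p)%N & s = (j * e)%N) \/ (exists2 i, (i <= l)%N & s = (y + i * e)%N).
Proof.
elim: s {-2}s (leqnn s) => [|n IH] s hsn hs hsc; first by left; exists 0%N; lia.
have [->|s0] := eqVneq s 0%N; first by left; exists 0%N.
have [->|sy] := eqVneq s y; first by right; exists 0%N; lia.
have [hes hse] := vset_sub_e hs ltac:(lia) sy.
have [[j hj ej]|[i hi ei]] := IH (s - e)%N ltac:(lia) hse ltac:(lia).
  left; exists j.+1; last by rewrite mulSn -ej; lia.
  have : (j.+1 * e < p.+1 * e)%N by rewrite mulSn -ej; move: hp1; rewrite mulSn; lia.
  by rewrite ltn_mul2r => /andP [_]; lia.
right; exists i.+1; last by rewrite mulSn addnCA -ei; lia.
have : (i.+1 * e < l.+1 * e)%N by move: hl2; rewrite !mulSn; lia.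
by rewrite ltn_mul2r => /andP [_]; lia.
Qed.

Lemma y_neq_mul_e j : y != (j * e)%N.
Proof.
apply/eqP => ey; apply: hy3; have := e_lt_y; rewrite ey => hj.
split; first by lia.
by rewrite -{2}(mul1n e) -mulnBl; apply: vset_mul_e.
Qed.

Definition low_values :=
  [seq (j * e)%N | j <- iota 0 p.+1] ++ [seq (y + i * e)%N | i <- iota 0 l.+1].

Lemma low_values_uniq : uniq low_values.
Proof.
rewrite cat_uniq; apply/and3P; split.
- by rewrite map_inj_uniq ?iota_uniq // => a b /eqP; rewrite eqn_pmul2r // => /eqP.
- apply/hasPn => _ /mapP [i _ ->]; apply/mapP => -[j _ ej].
  by move/eqP: (y_neq_mul_e (j - i)); apply; rewrite mulnBl; lia.
- rewrite map_inj_uniq ?iota_uniq // => a b /eqP.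
  by rewrite eqn_add2l eqn_pmul2r // => /eqP.
Qed.

Lemma mem_low_values j : (j < c)%N -> vset R v j <-> j \in low_values.
Proof.
move=> jc; rewrite mem_cat; split.
  move/vset_lt_c => /(_ jc) [[i hi ->]|[i hi ->]]; apply/orP; [left | right];
    by apply/mapP; exists i => //; rewrite mem_iota; lia.
by case/orP => /mapP [i _ ->]; [apply: vset_mul_e | apply: vset_y_add].
Qed.

Lemma low_values_lt_c j : j \in low_values -> (j < c)%N.
Proof.
rewrite mem_cat => /orP [] /mapP [i]; rewrite mem_iota => /andP [_ hi] ->.
  by apply: leq_ltn_trans hp2; rewrite leq_mul2r; lia.
by apply: leq_ltn_trans hl1; rewrite leq_add2l leq_mul2r; lia.
Qed.

Lemma count_vset_lt_c :
  count (fun j : nat => `[< vsetz v R (0 + j%:Z) >]) (iota 0 c) = (p + l + 2)%N.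
Proof.
rewrite (count_iota_uniq low_values_uniq _ low_values_lt_c).
  by rewrite size_cat !size_map !size_iota; lia.
by move=> j jc; rewrite add0r; apply/asboolP/idP => /(mem_low_values jc).
Qed.

Variable delta : nat.
Hypothesis hdelta : rlength R (vring v) R delta.

Lemma delta_eq : (delta + (p + l + 2))%N = c.
Proof.
have hlo z : vring v z -> z != 0 -> 0 <= v z by case=> [->|//]; rewrite eqxx.
have := rlength_newvals hR hai hrr hdelta vge_c_R hlo (le0z_nat c).
rewrite subr0 absz_nat => <-.
have := count_predC (fun j : nat => `[< vsetz v R (0 + j%:Z) >]) (iota 0 c).
rewrite count_vset_lt_c size_iota => hC.
rewrite -[in RHS]hC addnC; congr (_ + _)%N.
apply: eq_count => j /=; apply/asboolP/asboolPn => [[] // | nRj].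
have [t [t0 vt]] := exists_val_nat hv j.
by split=> //; exists t; rewrite add0r; split=> //; right; lia.
Qed.

Lemma maxideal_val_ge_e a : maxideal R a -> a != 0 -> e%:Z <= v a.
Proof.
move=> hm a0; have va := maxideal_val_gt0 hR hai hrr hloc hm a0.
suff : (e <= `|v a|)%N by lia.
by apply: he3; [lia | exists a; case: hm => ha _; split=> //; lia].
Qed.

(* Multiplying an element of each value of the maximal ideal by [w / a] lands in
   [R], and [submod_sub_of_vsetz] spreads this to the whole maximal ideal. *)
Lemma vsetz_colon_maxideal : (c + e <= y + y)%N ->
  vsetz v (colon R (maxideal R)) (y - e)%N.
Proof.
move=> hyy; have [w [hw w0 vw]] := hy1; have [a [ha a0 va]] := he2.
have hey := e_lt_y.
have z0 : w / a != 0 by rewrite mulf_neq0 ?invr_neq0.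
have vz : v (w / a) = (y - e)%N.
  by rewrite valuationM ?invr_neq0 // valuationV // vw va; lia.
exists (w / a); split=> // u hu.
pose A u := maxideal R u /\ R (w / a * u).
have [_ sM] := hloc.
have sA : submod R A.
  have [m0 mD mM] := sM.
  split; first by split; [exact: m0 | rewrite mulr0; exact: subring0].
    move=> u1 u2 [hu1 hzu1] [hu2 hzu2].
    by split; [exact: mD | rewrite mulrDr; exact: subringD].
  by move=> s u1 hs [hu1 hzu1]; split; [exact: mM | rewrite mulrCA; exact: subringM].
have hgeA u1 : vge v c%:Z u1 -> A u1.
  move=> hu1; split.
    case: hu1 => [->|hu1]; first by split; [exact: subring0 | case=> _ /eqP].
    by apply: (val_gt0_maxideal hR hai (vge_c_R (or_intror hu1))); lia.
  have hz : vge v (v (w / a)) (w / a) by right.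
  by apply: vge_c_R; apply: (vgeW _ (vgeM hv hz hu1)); rewrite vz; lia.
have sMA : subset_of (maxideal R) A.
  apply: (submod_sub_of_vsetz hR hai hrr sA sM (fun _ hu1 => hu1.1) hgeA) => b hb b0.
  have vb := maxideal_val_ge_e hb b0.
  have [hcb|hbc] := leP c%:Z (v b).
    have [t [t0 vt]] := exists_val_nat hv `|v b|%N.
    by exists t; split=> //; [apply: hgeA; right | ]; lia.
  have hvb : vset R v `|v b|%N by exists b; case: hb => hbR _; split=> //; lia.
  have [[[|j] hj ej]|[i hi ei]] := vset_lt_c hvb ltac:(lia); first by lia.
    have vaj : v (a ^+ j.+1) = (j.+1 * e)%N by rewrite valuationX // va; lia.
    exists (a ^+ j.+1); split; [split | exact: expf_neq0 | lia].
      by apply: (val_gt0_maxideal hR hai); [apply: subringX | lia].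
    by rewrite exprS mulrA divfK //; apply: subringM => //; apply: subringX.
  have wa0 : w * a ^+ i != 0 by rewrite mulf_neq0 ?expf_neq0.
  have vwa : v (w * a ^+ i) = (y + i * e)%N.
    by rewrite valuationM ?expf_neq0 // valuationX // vw va; lia.
  exists (w * a ^+ i); split; [split | exact: wa0 | lia].
    by apply: (val_gt0_maxideal hR hai); [apply: subringM => //; apply: subringX | lia].
  by apply: vge_c_R; right; rewrite valuationM // vz vwa; lia.
by case: (sMA u hu).
Qed.

Variable r : nat.
Hypothesis hr : rlength R (colon R (maxideal R)) R r.

(* The values [y - e] and [j - e], for [c <= j < c + e] other than [(p+1) e] and
   [y + (l+1) e], belong to [v(R :_K m)] but not to [v(R)]. *)
Lemma r_ge_of_2y : (c + e <= y + y)%N -> (e <= r.+1)%N.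
Proof.
move=> hyy; have hey := e_lt_y.
have hlo z : colon R (maxideal R) z -> z != 0 -> - e%:Z <= v z.
  move=> hz z0; have [a [ha a0 va]] := he2.
  have ma : maxideal R a by apply: (val_gt0_maxideal hR hai ha); lia.
  have := subring_val_ge0 hR hai (hz a ma) (mulf_neq0 z0 a0).
  by rewrite valuationM // va; lia.
have := rlength_newvals hR hai hrr (N0 := c%:Z) hr vge_c_R hlo ltac:(lia).
rewrite (_ : `|c%:Z - - e%:Z|%N = (c + e)%N); last by lia.
move=> <-.
set A := (p.+1 * e)%N; set B := (y + l.+1 * e)%N.
have AB : A != B.
  apply/eqP => eAB; move/eqP: (y_neq_mul_e (p - l)); apply.
  move: eAB; rewrite /A /B mulnBl !mulSn => eAB.
  have : (l * e <= p * e)%N by lia.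
  by lia.
have hAr : (c <= A < c + e)%N by rewrite /A mulSn; apply/andP; split; lia.
have hBr : (c <= B < c + e)%N.
  by move: hl1 hl2; rewrite /B !mulSn => *; apply/andP; split; lia.
set F := [seq j <- iota c e | (j != A) && (j != B)].
have sizeF : size F = (e - 2)%N by rewrite size_filter count_neq2_iota.
have hF j : j \in F -> [/\ (c <= j < c + e)%N, j != A & j != B].
  by rewrite mem_filter mem_iota => /andP [/andP [jA jB] jr].
suff : (size (y :: F) <= newvals v (colon R (maxideal R)) R (- e%:Z) (c + e))%N.
  by rewrite /= sizeF; lia.
apply: leq_size_count_iota => [|j].
  rewrite /= filter_uniq ?iota_uniq // andbT.
  by apply/negP => /hF [/andP [cy _] _ _]; lia.
rewrite inE => /orP [/eqP ->|/hF [/andP [cj jce] jA jB]]; (apply/andP; split; last by lia).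
  apply/asboolP; rewrite (_ : - e%:Z + y%:Z = (y - e)%N%:Z); last by lia.
  split; first exact: vsetz_colon_maxideal.
  by move=> hs; apply: hy3; split=> //; lia.
apply/asboolP; rewrite (_ : - e%:Z + j%:Z = (j - e)%N%:Z); last by lia.
split.
  have [t [t0 vt]] := exists_val_nat hv (j - e).
  exists t; split=> // u hu; apply: vge_c_R.
  have [->|u0] := eqVneq u 0; first by left; rewrite mulr0.
  by right; rewrite valuationM // vt; have := maxideal_val_ge_e hu u0; lia.
move/vset_lt_c => /(_ ltac:(lia)) [[i hi ei]|[i hi ei]].
  case: (ltnP i p) => hip.
    have : (i.+1 * e <= p * e)%N by rewrite leq_mul2r hip orbT.
    by rewrite mulSn -ei; lia.
  have eip : i = p by lia.
  by move: jA; rewrite /A mulSn -eip -ei; lia.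
case: (ltnP i l) => hil.
  have : (i.+1 * e <= l * e)%N by rewrite leq_mul2r hil orbT.
  by rewrite mulSn; lia.
have eil : i = l by lia.
by move: jB; rewrite /B mulSn -eil addnCA -ei; lia.
Qed.

Lemma p_bound_of_r : r.+2 = e -> (p <= l.*2.+2)%N /\ (p = l.*2.+2 -> (c < p.+1 * e)%N).
Proof.
move=> re; have hey := e_lt_y.
have hyy : vset R v (y + y).
  have [w [hw w0 vw]] := hy1.
  by exists (w * w); split; [exact: subringM | exact: mulf_neq0 | rewrite valuationM // vw].
have [yyc|cyy] := ltnP (y + y) c.
  have [[j hj ej]|[i hi ei]] := vset_lt_c hyy yyc; last first.
    by move/eqP: (y_neq_mul_e i); case; lia.
  have hje : (j * e <= p * e)%N by rewrite leq_mul2r hj orbT.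
  suff : (p < l.*2.+2)%N by lia.
  by move: hl2 hp2; nia.
have hyy' : ~ (c + e <= y + y)%N by move=> /r_ge_of_2y; lia.
have hyl : (y < l.+2 * e)%N by move: hl2; nia.
split; first by move: hp2 hl2; nia.
move=> ep; case: (ltnP c (p.+1 * e)) => // hc.
by exfalso; move: hc hl2 hyl; rewrite ep; nia.
Qed.

Lemma c_neq_pe_add1 : c != (p * e).+1.
Proof. by apply/eqP => ec; apply: not_vset_predc; rewrite ec; apply: vset_mul_e. Qed.

(* This rules out the extremal value [b = (l+1)(e-2) + e - 3] of the theorem,
   which would force [p = l + 1] and [c = p e + 2]. *)
Lemma c_neq_pe_add2 : p = l.+1 -> c != (p * e + 2)%N.
Proof.
move=> pl; apply/eqP => ec; have hey := e_lt_y.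
have ey : y = e.+1 by move: hl1; rewrite ec pl mulSn; lia.
apply: not_vset_predc; rewrite (_ : c.-1 = y + l * e)%N; first exact: vset_y_add.
by rewrite ec ey pl mulSn; lia.
Qed.

Lemma l_lt_p : (l < p)%N.
Proof.
have hey := e_lt_y.
have : (l.+1 * e < p.+1 * e)%N by move: hl1 hp1; rewrite !mulSn; lia.
by rewrite ltn_mul2r => /andP [_]; lia.
Qed.

Lemma colength_two_invariants :
  [/\ (delta + (p + l + 2))%N = c, (l < p)%N,
      c != (p * e).+1, (p = l.+1 -> c != (p * e + 2)%N)
    & r.+2 = e -> (p <= l.*2.+2)%N /\ (p = l.*2.+2 -> (c < p.+1 * e)%N)].
Proof.
split; [exact: delta_eq | exact: l_lt_p |
        exact: c_neq_pe_add1 | exact: c_neq_pe_add2 | exact: p_bound_of_r].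
Qed.

End ColengthTwo.

Unset Implicit Arguments.
Set Strict Implicit.

Theorem lemma2p3 (K : fieldType) (R : K -> Prop) (v : K -> int)
  (hR : subring R) (hQ : quotfield R) (hloc : local_ring R)
  (hnoeth : noetherian R) (hdim : one_dim_local R) (hreg : ~ regular R)
  (hai : analytically_irreducible R v) (hrr : residually_rational R v)
  (c delta r e k p h y l : nat) (x : K)
  (* c : least element of v(R) with c + N contained in v(R) *)
  (hc1 : vset R v c) (hc2 : forall m, (c <= m)%N -> vset R v m)
  (hc3 : forall c', vset R v c' -> (forall m, (c' <= m)%N -> vset R v m) -> (c <= c')%N)
  (* delta = l_R(Rbar / R),  r = l_R((R :_K m) / R) *)
  (hdelta : rlength R (vring v) R delta)
  (hr : rlength R (colon R (maxideal R)) R r)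
  (* e : least positive element of v(R) *)
  (he1 : (0 < e)%N) (he2 : vset R v e)
  (he3 : forall n, (0 < n)%N -> vset R v n -> (e <= n)%N)
  (* x in m with v(x) = e, k = l_R(R/(C + xR)) with C = (R :_K Rbar) *)
  (hx1 : maxideal R x) (hx2 : v x = e%:Z)
  (hk : rlength R R (sum_mul (colon R (vring v)) x R) k)
  (* p, h *)
  (hp1 : c%:Z - e%:Z <= (p * e)%:Z) (hp2 : (p * e < c)%N)
  (hh : h%:Z = (p.+1 * e)%:Z - c%:Z)
  (* k = 2, y = y_1, l = l_1 *)
  (hk2 : k = 2%N)
  (hy1 : vset R v y) (hy2 : (0 < y < c)%N)
  (hy3 : ~ ((e <= y)%N /\ vset R v (y - e)))
  (hl1 : (y + l * e < c)%N) (hl2 : (c <= y + l.+1 * e)%N) :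
  let b : int := (c%:Z - delta%:Z) * r%:Z - delta%:Z in
  (r%:Z = e%:Z - 1 ->
     [/\ b = (l.+1 * e + h)%:Z, b <= (l.+2 * e)%:Z - 2
       & b = (l.+2 * e)%:Z - 2 <-> h%:Z = e%:Z - 2]) /\
  (r%:Z = e%:Z - 2 ->
     [/\ b = l.+1%:Z * (e%:Z - 1) + h%:Z - p%:Z - 1,
         c%:Z = (p + l.+2)%:Z * (e%:Z - 1) - b,
         ((l.+1 <= p)%N /\ (p <= l.*2.+2)%N) /\ (p = l.*2.+2 -> (0 < h)%N),
         (l.+1%:Z * (e%:Z - 3) <= b /\ b <= l.+1%:Z * (e%:Z - 2) + e%:Z - 3)
       & (b = l.+1%:Z * (e%:Z - 3) <->
            (p = l.*2.+2 /\ h = 1%N) \/ (p = l.*2.+1 /\ h = 0%N)) /\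
         (b = l.+1%:Z * (e%:Z - 2) + e%:Z - 3 ->
            [/\ p = l.+1, (1 < p)%N, h%:Z = e%:Z - 2 & y = e.+1])]).
Proof.
move=> b; subst k.
have [ed lp c1 c2 pbound] := colength_two_invariants hR hQ hloc hai hrr hc2 hc3 he1
  he2 he3 hp1 hp2 hy1 hy2 hy3 hl1 hl2 hx2 hk hdelta hr.
have eb : b = (p + l + 2)%:Z * r%:Z - delta%:Z.
  by rewrite /b (_ : c%:Z - delta%:Z = (p + l + 2)%:Z) //; lia.
by split=> hre; rewrite eb hre; split; lia.
Qed.
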